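(* Let $L$ be a finite-dimensional Lie algebra over a field $K$ of characteristic $\neq 2$. The following are equivalent: (i) $L$ has an idempotent Hom-Lie structure $\varphi$ (i.e. $\varphi^2=\varphi$) which is different from the zero map and from the identity map; (ii) $L$ decomposes as a direct sum of vector spaces $L = A \oplus B$ with $A \neq 0$, $B \neq 0$, $[[A,A],B] = 0$ and $[[B,B],A] = 0$.
   Context: A Hom-Lie structure on a Lie algebra $L$ is a linear map $\varphi: L \to L$ satisfying $[[x,y],\varphi(z)] + [[z,x],\varphi(y)] + [[y,z],\varphi(x)] = 0$ for all $x,y,z \in L$. *)

From HB Require Import structures.
From mathcomp Require Import all_boot all_order all_algebra.
Set Implicit Arguments. Unset Strict Implicit. Unset Printing Implicit Defensive.
Import GRing.Theory.
Local Open Scope ring_scope.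

Definition lie_bracket (K : fieldType) (L : vectType K) (br : L -> L -> L) : Prop :=
  [/\ (forall (a : K) (x y z : L), br (a *: x + y) z = a *: br x z + br y z),
      (forall (a : K) (x y z : L), br z (a *: x + y) = a *: br z x + br z y),
      (forall x : L, br x x = 0) &
      (forall x y z : L, br x (br y z) + br y (br z x) + br z (br x y) = 0)].

Definition hom_lie_structure (K : fieldType) (L : vectType K)
    (br : L -> L -> L) (phi : 'End(L)) : Prop :=
  forall x y z : L,
    br (br x y) (phi z) + br (br z x) (phi y) + br (br y z) (phi x) = 0.

(* For an idempotent phi we have L = Im phi (+) Ker phi with phi the projection onto
   A := Im phi along B := Ker phi, and conversely every splitting L = A (+) B comes
   from such a projection; phi is neither 0 nor 1 exactly when A and B are nonzero.
   For a projection the Hom-Lie defect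
     D(x, y, z) = [[x,y],phi z] + [[z,x],phi y] + [[y,z],phi x]
   is trilinear and cyclically symmetric, so it vanishes everywhere iff it vanishes
   on triples taken from A and B.  Up to rotation there are four such triples:
   D(a,a',a'') = 0 and D(b,b',b'') = 0 always, D(b,b',a) = [[b,b'],a], and by the
   Jacobi identity D(a,a',b) = -[[a,a'],b]. *)

From HB Require Import structures.
From mathcomp Require Import all_boot all_order all_algebra.
Import GRing.Theory.
Local Open Scope ring_scope.
Set Implicit Arguments. Unset Strict Implicit.

Section Projections.
Variables (K : fieldType) (L : vectType K).
Implicit Types (A B : {vspace L}) (phi : 'End(L)).

Lemma daddv_pi_eq0 A B b : (A :&: B = 0)%VS -> b \in B -> daddv_pi A B b = 0.
Proof.
move=> capAB Bb; have ABb : b \in (A + B)%VS by rewrite -[b]add0r memv_add ?mem0v.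
apply: (addIr b); rewrite add0r -{3}(daddv_pi_add capAB ABb).
by rewrite [daddv_pi B A b]daddv_pi_id // capvC.
Qed.

Section Idempotent.
Variable phi : 'End(L).
Hypothesis idem : (phi \o phi)%VF = phi.

Lemma idemK x : phi (phi x) = phi x.
Proof. by rewrite -comp_lfunE idem. Qed.

Lemma idem_limg_id a : a \in limg phi -> phi a = a.
Proof. by case/memv_imgP=> x _ ->; rewrite idemK. Qed.

Lemma idem_sub_lker x : x - phi x \in lker phi.
Proof. by rewrite memv_ker linearB /= idemK subrr. Qed.

Lemma idem_limg_lker_full : (limg phi + lker phi)%VS = fullv.
Proof.
apply/eqP; rewrite eqEsubv subvf; apply/subvP=> x _.
by rewrite -[x](subrK (phi x)) addrC memv_add ?memv_img ?memvf ?idem_sub_lker.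
Qed.

Lemma idem_limg_lker_direct : directv (limg phi + lker phi).
Proof.
apply/directv_addP/eqP; rewrite -subv0; apply/subvP=> x /memv_capP[Ix].
by rewrite memv_ker memv0 idem_limg_id.
Qed.

Lemma idem_limg_eq0 : limg phi = 0%VS -> phi = 0.
Proof.
move=> I0; apply/lfunP=> x; rewrite zero_lfunE; apply/eqP.
by rewrite -memv0 -I0 memv_img ?memvf.
Qed.

Lemma idem_lker_eq0 : lker phi = 0%VS -> phi = \1%VF.
Proof.
move=> K0; apply/lfunP=> x; rewrite id_lfunE; apply/eqP.
by rewrite eq_sym -subr_eq0 -memv0 -K0 idem_sub_lker.
Qed.

End Idempotent.
End Projections.

Section HomLieDefect.
Variables (K : fieldType) (L : vectType K) (br : L -> L -> L).
Hypothesis lieL : lie_bracket br.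

Lemma lie_brDl x y z : br (x + y) z = br x z + br y z.
Proof. by case: lieL => linl _ _ _; rewrite -[x]scale1r linl !scale1r. Qed.

Lemma lie_brDr x y z : br z (x + y) = br z x + br z y.
Proof. by case: lieL => _ linr _ _; rewrite -[x]scale1r linr !scale1r. Qed.

Lemma lie_br0r z : br z 0 = 0.
Proof. by apply: (addrI (br z 0)); rewrite -lie_brDr !addr0. Qed.

Lemma lie_anticomm x y : br x y = - br y x.
Proof.
case: lieL => _ _ alt _; apply/eqP; rewrite -addr_eq0.
by have := alt (x + y); rewrite lie_brDl !lie_brDr !alt add0r addr0 => ->.
Qed.

Lemma lie_jacobi_l x y z : br (br x y) z + br (br y z) x + br (br z x) y = 0.
Proof.
case: lieL => _ _ _ jacobi; apply/eqP; rewrite -oppr_eq0 !opprD.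
by rewrite -!lie_anticomm addrC addrA jacobi.
Qed.

Definition hom_lie_defect (phi : 'End(L)) x y z :=
  br (br x y) (phi z) + br (br z x) (phi y) + br (br y z) (phi x).

Lemma hom_lie_defect_rot phi x y z :
  hom_lie_defect phi x y z = hom_lie_defect phi y z x.
Proof. by rewrite /hom_lie_defect addrC addrA. Qed.

Lemma hom_lie_defectDl phi x x' y z :
  hom_lie_defect phi (x + x') y z =
  hom_lie_defect phi x y z + hom_lie_defect phi x' y z.
Proof.
rewrite /hom_lie_defect linearD /= !(lie_brDl, lie_brDr).
by rewrite [X in X + _ = _]addrACA [LHS]addrACA.
Qed.

Section Splitting.
Variables (A B : {vspace L}) (phi : 'End(L)).
Hypothesis AB_full : (A + B)%VS = fullv.

Let AorB x := (x \in A) || (x \in B).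

Lemma hom_lie_defect_splitl y z :
  (forall u, AorB u -> hom_lie_defect phi u y z = 0) ->
  forall x, hom_lie_defect phi x y z = 0.
Proof.
move=> D0 x; have /memv_addP[a Aa [b Bb ->]] : x \in (A + B)%VS by rewrite AB_full memvf.
by rewrite hom_lie_defectDl !D0 ?addr0 /AorB ?Aa ?Bb ?orbT.
Qed.

Lemma hom_lie_structure_split :
  (forall x y z, AorB x -> AorB y -> AorB z -> hom_lie_defect phi x y z = 0) ->
  hom_lie_structure br phi.
Proof.
move=> D0.
have D0xy x y : AorB x -> AorB y -> forall z, hom_lie_defect phi x y z = 0.
  move=> ABx ABy z; rewrite hom_lie_defect_rot hom_lie_defect_rot.
  by apply: hom_lie_defect_splitl => u ABu; apply: D0.
have D0x x : AorB x -> forall y z, hom_lie_defect phi x y z = 0.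
  move=> ABx y z; rewrite hom_lie_defect_rot.
  by apply: hom_lie_defect_splitl => u ABu; rewrite -hom_lie_defect_rot; apply: D0xy.
by move=> x y z; apply: hom_lie_defect_splitl => u ABu; apply: D0x.
Qed.

Hypothesis phi_idA : forall a, a \in A -> phi a = a.
Hypothesis phi_0B : forall b, b \in B -> phi b = 0.

Lemma hom_lie_defect_AAA a1 a2 a3 : a1 \in A -> a2 \in A -> a3 \in A ->
  hom_lie_defect phi a1 a2 a3 = 0.
Proof. by move=> A1 A2 A3; rewrite /hom_lie_defect !phi_idA // addrAC lie_jacobi_l. Qed.

Lemma hom_lie_defect_BBB b1 b2 b3 : b1 \in B -> b2 \in B -> b3 \in B ->
  hom_lie_defect phi b1 b2 b3 = 0.
Proof. by move=> B1 B2 B3; rewrite /hom_lie_defect !phi_0B // !lie_br0r !addr0. Qed.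

Lemma hom_lie_defect_AAB a1 a2 b : a1 \in A -> a2 \in A -> b \in B ->
  hom_lie_defect phi a1 a2 b = - br (br a1 a2) b.
Proof.
move=> A1 A2 Bb; rewrite /hom_lie_defect phi_0B // !phi_idA // lie_br0r add0r.
by apply/eqP; rewrite -addr_eq0 addrAC lie_jacobi_l.
Qed.

Lemma hom_lie_defect_BBA b1 b2 a : b1 \in B -> b2 \in B -> a \in A ->
  hom_lie_defect phi b1 b2 a = br (br b1 b2) a.
Proof.
by move=> B1 B2 Aa; rewrite /hom_lie_defect (phi_idA Aa) !phi_0B // !lie_br0r !addr0.
Qed.

Lemma hom_lie_projectionP :
  hom_lie_structure br phi <->
  (forall a1 a2 b, a1 \in A -> a2 \in A -> b \in B -> br (br a1 a2) b = 0) /\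
  (forall b1 b2 a, b1 \in B -> b2 \in B -> a \in A -> br (br b1 b2) a = 0).
Proof.
split=> [homL | [AAB BBA]].
  split=> [a1 a2 b A1 A2 Bb | b1 b2 a B1 B2 Aa].
    by apply: oppr_inj; rewrite oppr0 -hom_lie_defect_AAB //; apply: homL.
  by rewrite -hom_lie_defect_BBA //; apply: homL.
apply: hom_lie_structure_split => x y z.
case/orP=> [Ax|Bx] /orP[Ay|By] /orP[Az|Bz].
- exact: hom_lie_defect_AAA.
- by rewrite hom_lie_defect_AAB // AAB ?oppr0.
- by rewrite -hom_lie_defect_rot hom_lie_defect_AAB // AAB ?oppr0.
- by rewrite hom_lie_defect_rot hom_lie_defect_BBA // BBA.
- by rewrite hom_lie_defect_rot hom_lie_defect_AAB // AAB ?oppr0.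
- by rewrite -hom_lie_defect_rot hom_lie_defect_BBA // BBA.
- by rewrite hom_lie_defect_BBA // BBA.
- exact: hom_lie_defect_BBB.
Qed.

End Splitting.
End HomLieDefect.

Theorem lemma2p2 (K : fieldType) (L : vectType K) (br : L -> L -> L) :
  (2 \notin [pchar K])%N ->
  lie_bracket br ->
  (exists phi : 'End(L),
      [/\ hom_lie_structure br phi, (phi \o phi)%VF = phi,
          phi != 0 & phi != \1%VF])
  <->
  (exists A B : {vspace L},
      [/\ (A + B)%VS = fullv, directv (A + B)%VS,
          A != 0%VS /\ B != 0%VS,
          (forall a1 a2 b, a1 \in A -> a2 \in A -> b \in B -> br (br a1 a2) b = 0) &
          (forall b1 b2 a, b1 \in B -> b2 \in B -> a \in A -> br (br b1 b2) a = 0)]).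
Proof.
move=> _ lieL; split=> [[phi [homL idem phi0 phi1]] | [A [B [full dir [A0 B0] AAB BBA]]]].
  have phi_0ker b : b \in lker phi -> phi b = 0 by rewrite memv_ker => /eqP.
  have [AAB BBA] := (hom_lie_projectionP lieL (idem_limg_lker_full idem)
    (idem_limg_id idem) phi_0ker).1 homL.
  exists (limg phi), (lker phi); split=> //.
  - exact: idem_limg_lker_full.
  - exact: idem_limg_lker_direct.
  - split; [apply: contraNneq phi0 | apply: contraNneq phi1] => I0.
      exact/eqP/idem_limg_eq0.
    exact/eqP/idem_lker_eq0.
have capAB := directv_addP dir.
have pi_idA := daddv_pi_id capAB; have pi_0B := daddv_pi_eq0 capAB.
exists (daddv_pi A B); split.
- by apply/(hom_lie_projectionP lieL full pi_idA pi_0B).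
- by apply/lfunP=> x; rewrite comp_lfunE daddv_pi_proj.
- apply: contraNneq A0 => pi0; rewrite -vpick0.
  by rewrite -(pi_idA _ (memv_pick A)) pi0 zero_lfunE.
- apply: contraNneq B0 => pi1; rewrite -vpick0.
  by rewrite -(pi_0B _ (memv_pick B)) pi1 id_lfunE.
Qed.
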